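(* Let $\Omega$ be a finite set of $n$ items, let $k,l\ge 1$ be integers, and let $f_1,\dots,f_m:2^\Omega\to\mathbb{R}_{\ge 0}$ be submodular (not necessarily monotone) functions. Then the algorithm $\textsf{Sampling-Greedy}$ returns a random set $S\subseteq\Omega$ with $|S|\le l$ such that $$\mathbb{E}_S[F(S)]\;\ge\;\frac{1}{2e}\,F(O),$$ where $O\in\arg\max_{S'\subseteq\Omega,\ |S'|\le l}F(S')$.
   Context: Define $F(S)=\sum_{i=1}^m\max_{A\subseteq S,\ |A|\le k} f_i(A)$. Submodularity of $f_i$: $f_i(A\cup\{x\})-f_i(A)\ge f_i(A'\cup\{x\})-f_i(A')$ for $A\subseteq A'$, $x\notin A'$. Notation: add a set $\Phi$ of $l$ dummy items and let $\Omega'=\Omega\cup\Phi$; extend each $f_i$ by $f_i(A)=f_i(A\cap\Omega)$ for $A\subseteq\Omega'$. Let $\Delta_i(x,A)=f_i(A\cup\{x\})-f_i(A)$; for $y\in A$, $\nabla_i(x,y,A)=f_i((A\setminus\{y\})\cup\{x\})-f_i(A)$; for $|A|\le k$: $\nabla_i(x,A)=0$ if $x\in A$; $\nabla_i(x,A)=\max\{0,\max_{y\in A}\nabla_i(x,y,A),\Delta_i(x,A)\}$ if $x\notin A$, $|A|<k$; $\nabla_i(x,A)=\max\{0,\max_{y\in A}\nabla_i(x,y,A)\}$ if $x\notin A$, $|A|=k$. Define $\textsf{Rep}_i(x,A)$ to be $\emptyset$ if $\nabla_i(x,A)=0$, or if $\nabla_i(x,A)>0$, $|A|<k$ and $\max_{y\in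 A}\nabla_i(x,y,A)<\Delta_i(x,A)$; otherwise (i.e. $\nabla_i(x,A)>0$ and either $|A|=k$, or $|A|<k$ and $\max_{y\in A}\nabla_i(x,y,A)\ge\Delta_i(x,A)$) it is $\{y^*\}$ for some $y^*\in\arg\max_{y\in A}\nabla_i(x,y,A)$. $\textsf{Trim}(B,f_i)$: start with $A\leftarrow B$, go once through the elements of $B$ in a fixed order and remove an element $x$ currently in $A$ whenever $f_i(A)-f_i(A\setminus\{x\})<0$; return $A$. $\textsf{Sampling-Greedy}$: initialize $S\leftarrow\emptyset$ and $T_i\leftarrow\emptyset$ for all $i\in[m]$. Repeat $l$ times: let $M$ be a set of exactly $l$ items of $\Omega'$ maximizing $\sum_{x\in M}\sum_{i=1}^m\nabla_i(x,T_i)$; pick $x^*$ uniformly at random from $M$ and set $S\leftarrow S\cup\{x^*\}$; for each $i\in[m]$ with $\nabla_i(x^*,T_i)>0$, set $T_i\leftarrow (T_i\setminus\textsf{Rep}_i(x^*,T_i))\cup\{x^*\}$ and then $T_i\leftarrow\textsf{Trim}(T_i,f_i)$. Finally output $S$ with dummy items removed (i.e. $S\cap\Omega$). *)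

From HB Require Import structures.
From mathcomp Require Import all_boot all_order all_algebra.
From mathcomp Require Import reals sequences exp.
Set Implicit Arguments. Unset Strict Implicit. Unset Printing Implicit Defensive.
Import Order.TTheory GRing.Theory Num.Theory.
Local Open Scope ring_scope.

(* Setting: ground set Omega = finType T, values in R : realType.
   Omega' = T + 'I_l  (the l dummy items are inr i). *)

Section SamplingGreedy.
Variable R : realType.
Variable T : finType.

Definition submodular (f : {set T} -> R) : Prop :=
  forall (A A' : {set T}) (x : T), A \subset A' -> x \notin A' ->
    f (x |: A') - f A' <= f (x |: A) - f A.

Definition nonneg_fun (f : {set T} -> R) : Prop := forall A, 0 <= f A.

(* F(S) = sum_i max_{A subset S, |A| <= k} f_i(A) (values are >= 0, and the
   empty set is always a candidate, so 0 is a harmless identity for max) *)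
Definition Fobj (m k : nat) (f : 'I_m -> {set T} -> R) (S : {set T}) : R :=
  \sum_(i < m) \big[Num.max/0]_(A : {set T} | (A \subset S) && (#|A| <= k)%N) f i A.

Variable l : nat.
Definition Tp : finType := (T + 'I_l)%type.

Definition ext (f : {set T} -> R) (A : {set Tp}) : R := f [set x : T | inl x \in A].

Section OneFunction.
Variable g : {set Tp} -> R.
Variable k : nat.

Definition Delta (x : Tp) (A : {set Tp}) : R := g (x |: A) - g A.
Definition nablaxy (x y : Tp) (A : {set Tp}) : R := g (x |: (A :\ y)) - g A.

(* nabla(x, A); sets with |A| >= k are treated as in the case |A| = k *)
Definition nabla (x : Tp) (A : {set Tp}) : R :=
  if x \in A then 0
  else if (#|A| < k)%N
       then Num.max (\big[Num.max/0]_(y in A) nablaxy x y A) (Delta x A)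
       else \big[Num.max/0]_(y in A) nablaxy x y A.

(* Rep_i(x,A) is nonempty iff nabla > 0 and (|A| = k, or max_y nabla(x,y,A) >= Delta) *)
Definition rep_cond (x : Tp) (A : {set Tp}) : bool :=
  (0 < nabla x A) && ((k <= #|A|)%N || [exists y in A, Delta x A <= nablaxy x y A]).

Definition trim (ord : seq Tp) (B : {set Tp}) : {set Tp} :=
  foldl (fun (A : {set Tp}) (x : Tp) => if (x \in A) && (g A - g (A :\ x) < 0) then A :\ x else A)
        B [seq x <- ord | x \in B].
End OneFunction.

Variables (m k : nat) (f : 'I_m -> {set T} -> R) (ord : seq Tp).
(* tie-breaking choices: [selM h] is the set M chosen after history h of picks;
   [selY h i] is the chosen y* in Rep_i when the last pick of h was x*. *)
Variables (selM : seq Tp -> {set Tp}) (selY : seq Tp -> 'I_m -> Tp).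

Definition stepT (h : seq Tp) (x : Tp) (Ts : 'I_m -> {set Tp}) : 'I_m -> {set Tp} :=
  fun i => let gi := ext (f i) in let A := Ts i in
    if 0 < nabla gi k x A then
      let rep := if rep_cond gi k x A then [set selY h i] else set0 in
      trim gi ord (x |: (A :\: rep))
    else A.

Fixpoint run (hd : seq Tp) (Ts : 'I_m -> {set Tp}) (rest : seq Tp) : 'I_m -> {set Tp} :=
  if rest is x :: r then let h' := rcons hd x in run h' (stepT h' x Ts) r else Ts.

Definition Tstate (h : seq Tp) : 'I_m -> {set Tp} := run [::] (fun _ => set0) h.

Definition gain (h : seq Tp) (M : {set Tp}) : R :=
  \sum_(x in M) \sum_(i < m) nabla (ext (f i)) k x (Tstate h i).

Definition valid_selM : Prop :=
  forall h, #|selM h| = l /\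
    forall M : {set Tp}, #|M| = l -> gain h M <= gain h (selM h).

Definition valid_selY : Prop :=
  forall h x (i : 'I_m), let gi := ext (f i) in let A := Tstate h i in
    rep_cond gi k x A ->
    selY (rcons h x) i \in A /\
    forall y, y \in A -> nablaxy gi x y A <= nablaxy gi x (selY (rcons h x) i) A.

Definition outset (h : seq Tp) : {set T} := [set x : T | inl x \in h].

(* expected value of F(output) when t rounds remain after picks h,
   x* uniform over selM h *)
Fixpoint Eval (t : nat) (h : seq Tp) : R :=
  if t is t'.+1 then (l%:R)^-1 * \sum_(x in selM h) Eval t' (rcons h x)
  else Fobj k f (outset h).

Definition reachable (h : seq Tp) : Prop :=
  forall h1 x h2, h = h1 ++ x :: h2 -> x \in selM h1.
End SamplingGreedy.

From mathcomp Require Import all_boot all_order all_algebra.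
From mathcomp Require Import reals sequences exp.
From mathcomp Require Import ring lra.
Import Order.TTheory GRing.Theory Num.Theory.
Local Open Scope ring_scope.
Set Implicit Arguments. Unset Strict Implicit. Unset Printing Implicit Defensive.

(* Let [T_i] be the sets kept by the algorithm and
   Phi = sum_i f_i(T_i). Adding [x] raises Phi by at least
   sum_i nabla_i(x, T_i) (Trim never lowers f_i), and [M] maximizes the total
   nabla, so comparing it with the optimum [O] (padded with dummies) through the
   exchange inequality sum_(x in O_i) nabla_i(x, T_i) >= f_i(T_i u O_i) - 2 f_i(T_i)
   gives E Phi_(t+1) >= (1 - 2/l) E Phi_t + (1/l) sum_i E f_i(T_i u O_i).
   After [t] rounds an item lies in [T_i] with probability at most
   1 - (1 - 1/l)^t, so by the sampling lemma of Feige, Mirrokni and Vondrak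
   E f_i(T_i u O_i) >= (1 - 1/l)^t f_i(O_i). Solving the recurrence yields
   E Phi_l >= (1/2) (1 - 1/l)^(l-1) F(O) >= F(O) / (2e), and Phi <= F(S)
   because each [T_i] is a subset of [S] of size at most [k]. *)

Section SubmodularSetFunctions.
Variables (R : realType) (U : finType).
Implicit Types (A B O Y : {set U}) (g : {set U} -> R).

Lemma set_card_ind (P : {set U} -> Prop) :
  (forall A, (forall B, (#|B| < #|A|)%N -> P B) -> P A) -> forall A, P A.
Proof.
move=> IH A; have [n] := ubnP #|A|; elim: n A => // n IHn A hA.
by apply: IH => B hB; apply: IHn; apply: leq_trans hB _; rewrite -ltnS.
Qed.

Lemma subset_card_between (S A : {set U}) n : S \subset A ->
  (#|S| <= n <= #|A|)%N -> exists Y, [/\ S \subset Y, Y \subset A & #|Y| = n].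
Proof.
move=> SA /andP[Sn]; rewrite -(subnKC Sn); elim: (n - #|S|)%N => [|d IH] hd.
  by exists S; rewrite addn0.
have [Y [SY YA cY]] : exists Y, [/\ S \subset Y, Y \subset A & #|Y| = #|S| + d]%N.
  by apply: IH; apply: leq_trans hd; rewrite leq_add2l.
have : Y \proper A by rewrite properEcard YA cY -addnS.
case/properP => _ [x xA xY]; exists (x |: Y); split.
- exact: subset_trans SY (subsetUr _ _).
- by rewrite subUset sub1set xA.
- by rewrite cardsU1 xY cY add1n addnS.
Qed.

Lemma ler_sum_subset A B (F : U -> R) : A \subset B -> (forall u, 0 <= F u) ->
  \sum_(u in A) F u <= \sum_(u in B) F u.
Proof.
move=> AB F0; rewrite [X in _ <= X](big_setID A) /= (setIidPr AB).
by rewrite lerDl sumr_ge0.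
Qed.

Lemma sum_eq_le1 A u : \sum_(x in A) ((u == x)%:R : R) <= 1.
Proof.
have [uA|uA] := boolP (u \in A); last first.
  by rewrite big1 // => x xA; case: eqP uA => // ->; rewrite xA.
rewrite (big_setD1 u uA) eqxx big1 /= ?addr0 // => x; rewrite !inE.
by case/andP; rewrite eq_sym => /negbTE ->.
Qed.

Lemma submod_gainS g A B x : submodular g -> A \subset B ->
  (x \in B -> x \in A) -> g (x |: B) - g B <= g (x |: A) - g A.
Proof.
move=> sg AB xBA; have [xB|xB] := boolP (x \in B); last exact: sg.
have xA := xBA xB.
have absorb (C : {set U}) : x \in C -> x |: C = C.
  by move=> xC; apply/setUidPr; rewrite sub1set.
by rewrite !absorb // !subrr.
Qed.

Lemma submodular_setUr g B : submodular g -> submodular (fun A => g (A :|: B)).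
Proof.
move=> sg A A' x AA' xA' /=; rewrite -!setUA.
apply: submod_gainS => //; first exact: setSU.
by rewrite !inE (negbTE xA') /= => ->; rewrite orbT.
Qed.

Lemma submod_setU_le_sum g A O : submodular g ->
  g (A :|: O) - g A <= \sum_(o in O) (g (o |: A) - g A).
Proof.
move=> sg; elim/set_card_ind: O => O IH.
have [->|[o oO]] := set_0Vmem O; first by rewrite setU0 big_set0 subrr.
have ltO : (#|O :\ o| < #|O|)%N by rewrite (cardsD1 o O) oO.
have step : g (A :|: O) - g (A :|: O :\ o) <= g (o |: A) - g A.
  rewrite -{1}(setD1K oO) setUCA; apply: submod_gainS => //; first exact: subsetUl.
  by rewrite !inE eqxx /= orbF.
rewrite (big_setD1 o oO) /=; have := IH _ ltO; lra.
Qed.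

(* Match each [o] in [O] with a distinct [y] in [Y]: removing [y] and adding
   [o] gains at most [N o], and by submodularity these gains add up. *)
Lemma submod_exchange g A O Y (N : U -> R) : submodular g ->
  [disjoint O & A] -> Y \subset A -> #|Y| = #|O| ->
  (forall o y, o \in O -> y \in A -> g (o |: (A :\ y)) - g A <= N o) ->
  g (A :|: O) - g A - (g A - g (A :\: Y)) <= \sum_(o in O) N o.
Proof.
move=> sg; elim/set_card_ind: O Y => O IH Y dOA YA cYO HN.
have [O0|[o oO]] := set_0Vmem O.
  move/eqP: cYO; rewrite O0 cards0 cards_eq0 => /eqP ->.
  by rewrite big_set0 setU0 setD0 !subrr.
have /card_gt0P[y yY] : (0 < #|Y|)%N by rewrite cYO; apply/card_gt0P; exists o.
have yA := subsetP YA y yY.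
have oA : o \notin A by rewrite (disjointFr dOA oO).
have ih : g (A :|: O :\ o) - g A - (g A - g (A :\: (Y :\ y))) <= \sum_(o' in O :\ o) N o'.
  apply: IH.
  - by rewrite (cardsD1 o O) oO.
  - exact: disjointWl (subD1set O o) dOA.
  - exact: subset_trans (subD1set Y y) YA.
  - by move/eqP: cYO; rewrite (cardsD1 y Y) (cardsD1 o O) yY oO eqn_add2l => /eqP.
  - by move=> o' y' /setD1P[_]; apply: HN.
have add_o : g (A :|: O) - g (A :|: O :\ o) <= g (o |: (A :\ y)) - g (A :\ y).
  rewrite -{1}(setD1K oO) setUCA; apply: sg.
    by apply/subsetP => z /setD1P[_ zA]; rewrite inE zA.
  by rewrite !inE eqxx (negbTE oA).
have remove_y : g A - g (A :\ y) <= g (A :\: (Y :\ y)) - g (A :\: Y).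
  have -> : A :\: (Y :\ y) = y |: (A :\: Y).
    by apply/setP => z; rewrite !inE; case: eqP => [->|]; rewrite ?yA ?yY.
  rewrite -{1}(setD1K yA); apply: sg; last by rewrite !inE eqxx.
  by apply/subsetP => z /setDP[zA zY]; rewrite !inE zA andbT; apply: contraNneq zY => ->.
have := HN o y oO yA; rewrite (big_setD1 o oO) /=; lra.
Qed.

Lemma gt0_le_max0 (a b : R) : 0 < a -> a <= Num.max 0 b -> a <= b.
Proof. by move=> a0; rewrite le_max => /orP[/(lt_le_trans a0)|//]; rewrite ltxx. Qed.

End SubmodularSetFunctions.

Section SamplingLemma.
Variables (R : realType) (U : finType) (H : Type) (E : (H -> R) -> R).
Hypothesis E_le : forall phi psi, (forall h, phi h <= psi h) -> E phi <= E psi.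
Hypothesis E_add : forall phi psi, E (fun h => phi h + psi h) = E phi + E psi.
Hypothesis E_scale : forall c phi, E (fun h => c * phi h) = c * E phi.
Hypothesis E_const : forall c, E (fun _ => c) = c.

Lemma E_ext phi psi : (forall h, phi h = psi h) -> E phi = E psi.
Proof. by move=> e; apply/le_anti; rewrite !E_le // => h; rewrite e. Qed.

(* Feige-Mirrokni-Vondrak: [E] is an expectation over [H] and [X] a random
   subset of [U0]; induct on [U0], removing an element of least probability. *)
Lemma submod_sampling (Psi : {set U} -> R) : submodular Psi -> (forall A, 0 <= Psi A) ->
  forall (U0 : {set U}) (X : H -> {set U}) (c d : R),
  (forall h, X h \subset U0) ->
  (forall u, u \in U0 -> d <= E (fun h => (u \in X h)%:R) <= c) -> d <= c ->
  (1 - c) * Psi set0 + d * Psi U0 <= E (fun h => Psi (X h)).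
Proof.
move=> sP P0 U0; elim/set_card_ind: U0 => U0 IH X c d XU pX dc.
have [U00|[u0 u0U]] := set_0Vmem U0.
  have -> : E (fun h => Psi (X h)) = Psi set0.
    rewrite -[RHS]E_const; apply: E_ext => h.
    by congr Psi; apply/eqP; rewrite -subset0 -U00.
  rewrite U00; have := P0 set0.
  have : 0 <= (c - d) * Psi set0 by rewrite mulr_ge0 // subr_ge0.
  lra.
pose p u := E (fun h => (u \in X h)%:R).
have [u uU umin] : exists2 u, u \in U0 & forall v, v \in U0 -> p u <= p v.
  by case: (arg_minP p u0U) => u uU umin; exists u.
have pu_c : p u <= c by have /andP[] := pX u uU.
have ih : (1 - c) * Psi set0 + p u * Psi (U0 :\ u) <= E (fun h => Psi (X h :\ u)).
  apply: IH => //; first by rewrite (cardsD1 u U0) uU.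
    by move=> h; apply: setSD.
  move=> v /setD1P[vu vU]; have pv : p v = E (fun h => (v \in X h :\ u)%:R).
    by apply: E_ext => h; rewrite !inE vu.
  by rewrite -pv umin //; have /andP[] := pX v vU.
have pointwise h :
    Psi (X h :\ u) + (u \in X h)%:R * (Psi U0 - Psi (U0 :\ u)) <= Psi (X h).
  have [uX|uX] := boolP (u \in X h); last first.
    by rewrite mul0r addr0; have /setDidPl -> : [disjoint X h & [set u]]
      by rewrite disjoint_sym disjoints1.
  have := sP _ _ u (setSD [set u] (XU h)).
  by rewrite !inE eqxx /= !setD1K // => /(_ isT); lra.
have hE : E (fun h => Psi (X h :\ u)) + p u * (Psi U0 - Psi (U0 :\ u)) <=
          E (fun h => Psi (X h)).
  by rewrite mulrC -E_scale -E_add; apply: E_le => h; rewrite mulrC; apply: pointwise.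
have : d * Psi U0 <= p u * Psi U0 by rewrite ler_wpM2r //; have /andP[] := pX u uU.
lra.
Qed.

End SamplingLemma.

Lemma inv_expR1_le (R : realType) (n : nat) :
  (expR (1 : R))^-1 <= (1 - (n.+1%:R : R)^-1) ^+ n.
Proof.
case: n => [|n].
  by rewrite expr0 invf_le1 ?expR_gt0 //; apply: le_trans (expR_ge1Dx 1); lra.
set N : R := n.+1%:R; have N0 : 0 < N by rewrite ltr0n.
have -> : (n.+2%:R : R) = N + 1 by rewrite -addn1 natrD.
set q := 1 - (N + 1)^-1; set E := expR N^-1.
have q0 : 0 <= q by rewrite /q subr_ge0 invf_le1; lra.
have Eq : 1 <= E * q.
  have -> : 1 = (1 + N^-1) * q by rewrite /q; field; rewrite !lt0r_neq0 //; lra.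
  by rewrite ler_wpM2r // expR_ge1Dx.
have -> : expR 1 = E ^+ n.+1 by rewrite /E -expRM_natl -/N mulfV // lt0r_neq0.
rewrite -div1r ler_pdivrMr ?exprn_gt0 ?expR_gt0 //.
by rewrite mulrC -exprMn exprn_ege1.
Qed.

Section GreedyStep.
Variables (R : realType) (T : finType) (l : nat) (g : {set Tp T l} -> R) (k : nat).
Implicit Types (A B O : {set Tp T l}) (x : Tp T l).

Lemma nabla_ge0 x A : 0 <= nabla g k x A.
Proof.
rewrite /nabla; case: (x \in A) => //; case: ifP => _; last exact: bigmax_ge_id.
by rewrite le_max bigmax_ge_id.
Qed.

Lemma nabla_gt0_notin x A : 0 < nabla g k x A -> x \notin A.
Proof. by apply: contraTN; rewrite /nabla => ->; rewrite ltxx. Qed.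

Lemma nabla_le_nablaxy x A y : rep_cond g k x A ->
  (forall z, z \in A -> nablaxy g x z A <= nablaxy g x y A) ->
  nabla g k x A <= nablaxy g x y A.
Proof.
case/andP=> npos cond ymax; have xA := nabla_gt0_notin npos.
apply: gt0_le_max0 npos _.
have bigle : \big[Num.max/0]_(z in A) nablaxy g x z A <= Num.max 0 (nablaxy g x y A).
  by apply: bigmax_le => [|z zA]; rewrite le_max ?lexx ?ymax ?orbT.
rewrite /nabla (negbTE xA); case: ifP => // kA.
move: cond; rewrite leqNgt kA /= => /existsP[z /andP[zA hz]].
by rewrite ge_max bigle le_max (le_trans hz (ymax z zA)) orbT.
Qed.

Lemma nabla_le_Delta x A : 0 < nabla g k x A -> ~~ rep_cond g k x A ->
  (#|A| < k)%N /\ nabla g k x A <= Delta g x A.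
Proof.
move=> npos; rewrite /rep_cond npos /= negb_or -ltnNge => /andP[kA /existsPn noz].
have xA := nabla_gt0_notin npos; split=> //; apply: gt0_le_max0 npos _.
have bigle : \big[Num.max/0]_(z in A) nablaxy g x z A <= Num.max 0 (Delta g x A).
  apply: bigmax_le => [|z zA]; rewrite le_max ?lexx //.
  by move: (noz z); rewrite zA /= -ltNge => /ltW ->; rewrite orbT.
by rewrite /nabla (negbTE xA) kA ge_max bigle le_max lexx orbT.
Qed.

(* With room left ([|A| < k]) nabla dominates the marginal gains; otherwise it
   dominates the swap gains, and [submod_exchange] applies. *)
Lemma sum_nabla_ge A O : submodular g -> (forall B, 0 <= g B) -> (#|O| <= k)%N ->
  g (A :|: O) - 2 * g A <= \sum_(x in O) nabla g k x A.
Proof.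
move=> sg g0 cO; set O' := O :\: A.
have -> : A :|: O = A :|: O' by apply/setP => z; rewrite !inE; case: (z \in A).
have sub := ler_sum_subset (subsetDl O A) (nabla_ge0^~ A); apply: le_trans sub.
have notinA x : x \in O' -> x \notin A by case/setDP.
have := g0 A; case: (ltnP #|A| k) => kA gA.
  have := submod_setU_le_sum A O' sg.
  suff : \sum_(o in O') (g (o |: A) - g A) <= \sum_(x in O') nabla g k x A by lra.
  apply: ler_sum => x /notinA xA.
  by rewrite /nabla (negbTE xA) kA le_max /Delta lexx orbT.
have [Y [_ YA cY]] :
    exists Y : {set Tp T l}, [/\ set0 \subset Y, Y \subset A & #|Y| = #|O'|].
  apply: subset_card_between (sub0set A) _; rewrite cards0 /=.
  by apply: leq_trans (leq_trans cO kA); apply: subset_leq_card; apply: subsetDl.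
have dO'A : [disjoint O' & A] by rewrite /O' disjoints_subset setDE subsetIr.
have swap o y : o \in O' -> y \in A -> g (o |: (A :\ y)) - g A <= nabla g k o A.
  move=> /notinA oA yA; rewrite /nabla (negbTE oA) ltnNge kA /=.
  exact: le_bigmax_cond.
have := submod_exchange (N := fun x => nabla g k x A) sg dO'A YA cY swap.
have := g0 (A :\: Y); lra.
Qed.

Lemma trim_subset_ge (ord : seq (Tp T l)) B :
  trim g ord B \subset B /\ g B <= g (trim g ord B).
Proof.
rewrite /trim; move: [seq x <- ord | x \in B] => s.
elim: s B => [|x s IH] B /=; first by [].
case: ifP => [/andP[_ hlt]|_]; last exact: IH.
have [sub ge] := IH (B :\ x); split; first exact: subset_trans sub (subD1set _ _).
by apply: le_trans ge; lra.
Qed.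

End GreedyStep.

Lemma invn_ge0 {R : numFieldType} {n : nat} : 0 <= (n%:R : R)^-1.
Proof. by rewrite invr_ge0 ler0n. Qed.

Lemma mulVn {R : numFieldType} {n : nat} : (0 < n)%N -> (n%:R : R)^-1 * n%:R = 1.
Proof. by move=> n_gt0; rewrite mulVf // pnatr_eq0 -lt0n. Qed.

Section UniformExpectation.
Variables (R : realType) (T : finType) (l : nat) (selM : seq (Tp T l) -> {set Tp T l}).
Local Notation TP := (Tp T l).
Local Notation r := (l%:R^-1 : R).

Fixpoint Ex (t : nat) (phi : seq TP -> R) (h : seq TP) : R :=
  if t is t'.+1 then r * \sum_(x in selM h) Ex t' phi (rcons h x) else phi h.

Lemma Ex_le t phi psi h : (forall h, phi h <= psi h) -> Ex t phi h <= Ex t psi h.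
Proof.
move=> le_phi; elim: t h => [|t IH] h /=; first exact: le_phi.
by rewrite ler_wpM2l ?invn_ge0 // ler_sum.
Qed.

Lemma Ex_add t phi psi h : Ex t (fun h => phi h + psi h) h = Ex t phi h + Ex t psi h.
Proof.
elim: t h => [|t IH] h //=.
by rewrite -mulrDr -big_split; congr (_ * _); apply: eq_bigr => x _; apply: IH.
Qed.

Lemma Ex_scale t c phi h : Ex t (fun h => c * phi h) h = c * Ex t phi h.
Proof.
elim: t h => [|t IH] h //=.
by rewrite (eq_bigr _ (fun x _ => IH (rcons h x))) -mulr_sumr mulrCA.
Qed.

Lemma Ex_sum I (s : seq I) t (F : I -> seq TP -> R) h :
  Ex t (fun h => \sum_(i <- s) F i h) h = \sum_(i <- s) Ex t (F i) h.
Proof.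
elim: t h => [|t IH] h //=.
by rewrite (eq_bigr _ (fun x _ => IH (rcons h x))) exchange_big mulr_sumr.
Qed.

Lemma ExSr t phi h :
  Ex t.+1 phi h = Ex t (fun h' => r * \sum_(x in selM h') phi (rcons h' x)) h.
Proof.
by elim: t h => [|t IH] h //=; rewrite (eq_bigr _ (fun x _ => IH (rcons h x))).
Qed.

Lemma Eval_Ex m k (f : 'I_m -> {set T} -> R) t h :
  Eval k f selM t h = Ex t (fun h => Fobj k f (outset h)) h.
Proof. by elim: t h => [|t IH] h //=; congr (_ * _); apply: eq_bigr => x _. Qed.

Hypothesis card_selM : forall h, #|selM h| = l.
Hypothesis l_gt0 : (0 < l)%N.

Lemma Ex_const t c h : Ex t (fun _ => c) h = c.
Proof.
elim: t h => [|t IH] h //=; rewrite (eq_bigr _ (fun x _ => IH (rcons h x))).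
by rewrite sumr_const card_selM -(mulr_natl c) mulrA (mulVn l_gt0) mul1r.
Qed.

(* Each round picks a given item with probability at most [r], so an item
   absent from [h0] is still absent after [t] rounds with probability at
   least [(1 - r)^t]. *)
Lemma Ex_mem_le t u h0 :
  Ex t (fun h => (u \in h)%:R) h0 <= 1 - (1 - r) ^+ t * (1 - (u \in h0)%:R).
Proof.
elim: t h0 => [|t IH] h0; first by rewrite /= expr0 mul1r; lra.
have [uh|uh] := boolP (u \in h0).
  have le1 h : ((u \in h)%:R : R) <= (fun=> 1) h by case: (u \in h).
  by rewrite subrr mulr0 subr0 -[leRHS](Ex_const t.+1 1 h0) Ex_le.
set Q := (1 - r) ^+ t in IH *; rewrite subr0 mulr1 exprS -/Q /=.
have step x : Ex t (fun h => (u \in h)%:R) (rcons h0 x) <= 1 - Q + Q * (u == x)%:R.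
  by apply: le_trans (IH _) _; rewrite mem_rcons inE (negbTE uh) orbF; lra.
apply: le_trans (ler_wpM2l invn_ge0 (ler_sum _ (fun x _ => step x))) _.
rewrite big_split sumr_const card_selM -mulr_sumr /= mulrDr -(mulr_natr (1 - Q)).
rewrite mulrCA (mulVn l_gt0) mulr1.
have Q0 : 0 <= Q by rewrite exprn_ge0 // subr_ge0 invf_le1 ?ler1n ?ltr0n.
have : r * (Q * \sum_(x in selM h0) ((u == x)%:R : R)) <= r * Q.
  by rewrite ler_wpM2l ?invn_ge0 // ler_piMr // sum_eq_le1.
lra.
Qed.

End UniformExpectation.

Section Extension.
Variables (R : realType) (T : finType) (l : nat).
Implicit Types (f : {set T} -> R) (S : {set T}) (A : {set Tp T l}).

Lemma submodular_ext f : submodular f -> submodular (@ext R T l f).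
Proof.
move=> sf A A' [t|j] AA' xA'; rewrite /ext.
  have e A'' : [set z | inl z \in inl t |: A''] = t |: [set z | inl z \in A''].
    by apply/setP => z; rewrite !inE.
  rewrite !e; apply: sf; last by rewrite inE.
  by apply/subsetP => z; rewrite !inE => /(subsetP AA').
have e A'' : [set z | inl z \in inr j |: A''] = [set z | inl z \in A''].
  by apply/setP => z; rewrite !inE.
by rewrite !e !subrr.
Qed.

Lemma ext_imset_inl f S : ext f (@inl T 'I_l @: S) = f S.
Proof.
by rewrite /ext; congr f; apply/setP => z; rewrite inE (mem_imset _ _ (@inl_inj _ _)).
Qed.

Lemma card_preimage_inl A : (#|[set t : T | inl t \in A]| <= #|A|)%N.
Proof.
rewrite -(card_imset _ (@inl_inj T 'I_l)); apply: subset_leq_card.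
by apply/subsetP => z /imsetP[t]; rewrite inE => ? ->.
Qed.

Lemma card_outset (h : seq (Tp T l)) : (#|outset h| <= size h)%N.
Proof.
rewrite -(card_imset _ (@inl_inj T 'I_l)); apply: leq_trans (card_size h).
by apply: subset_leq_card; apply/subsetP => z /imsetP[t]; rewrite inE => ? ->.
Qed.

End Extension.

Section SamplingGreedyAnalysis.
Variables (R : realType) (T : finType) (m k l : nat) (f : 'I_m -> {set T} -> R)
  (ord : seq (Tp T l)) (selM : seq (Tp T l) -> {set Tp T l})
  (selY : seq (Tp T l) -> 'I_m -> Tp T l).
Hypotheses (l_gt0 : (0 < l)%N) (f_submod : forall i, submodular (f i))
  (f_ge0 : forall i, nonneg_fun (f i))
  (vM : valid_selM k f ord selM selY) (vY : valid_selY k f ord selY).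
Local Notation TP := (Tp T l).
Local Notation Ts := (Tstate k f ord selY).
Local Notation Ex := (Ex selM).
Local Notation r := (l%:R^-1 : R).
Local Notation q := (1 - r).
Let card_selM h : #|selM h| = l := (vM h).1.

Lemma run_rcons hd Ts0 s x : run k f ord selY hd Ts0 (rcons s x) =
  stepT k f ord selY (hd ++ rcons s x) x (run k f ord selY hd Ts0 s).
Proof.
by elim: s hd Ts0 => [|y s IH] hd Ts0 /=; [rewrite cats1 | rewrite IH cat_rcons].
Qed.

Lemma Tstate_rcons h x : Ts (rcons h x) = stepT k f ord selY (rcons h x) x (Ts h).
Proof. exact: run_rcons. Qed.

Lemma Tstate_step h x i (g := ext (f i)) (A := Ts h i) (B := Ts (rcons h x) i) :
  [/\ g A + nabla g k x A <= g B, (#|A| <= k -> #|B| <= k)%N & B \subset x |: A].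
Proof.
rewrite {}/B Tstate_rcons /stepT /= -/A -/g.
case: ifP => [npos|/negbT]; last first.
  by rewrite -leNgt => nle0; split=> //; [lra | exact: subsetUr].
have trim_sub C : trim g ord C \subset C by case: (trim_subset_ge g ord C).
have trim_ge C : g C <= g (trim g ord C) by case: (trim_subset_ge g ord C).
case: ifP => rc.
  have [yA ymax] := vY rc; set y := selY _ i in yA ymax *.
  have := nabla_le_nablaxy rc ymax; rewrite /nablaxy => le_swap.
  have card_swap : (#|x |: A :\ y| <= #|A|)%N.
    by rewrite cardsU1 [leqRHS](cardsD1 y A) yA leq_add2r leq_b1.
  split; first by apply: le_trans (trim_ge _); lra.
  - move=> kA; apply: leq_trans (subset_leq_card (trim_sub _)) _.
    exact: leq_trans card_swap kA.
  - by apply: subset_trans (trim_sub _) _; rewrite setUS ?subsetDl.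
have [kA le_add] := nabla_le_Delta npos (negbT rc); rewrite setD0.
split; first by apply: le_trans (trim_ge _); move: le_add; rewrite /Delta; lra.
- move=> _; apply: leq_trans (subset_leq_card (trim_sub _)) _.
  by rewrite cardsU1 (negbTE (nabla_gt0_notin npos)).
- exact: trim_sub.
Qed.

Lemma Tstate_card h i : (#|Ts h i| <= k)%N.
Proof.
elim/last_ind: h => [|h x IH]; first by rewrite cards0.
by have [_ /(_ IH)] := Tstate_step h x i.
Qed.

Lemma Tstate_sub h i : Ts h i \subset [set y | y \in h].
Proof.
elim/last_ind: h => [|h x IH]; first exact: sub0set.
have [_ _ /subset_trans->] // := Tstate_step h x i.
rewrite subUset sub1set inE mem_rcons mem_head; apply: subset_trans IH _.
by apply/subsetP => y; rewrite !inE mem_rcons inE orbC => ->.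
Qed.

Definition potential h := \sum_(i < m) ext (f i) (Ts h i).

Lemma potential_le_Fobj h : potential h <= Fobj k f (outset h).
Proof.
apply: ler_sum => i _; rewrite /ext; apply: le_bigmax_cond; apply/andP; split.
  by apply/subsetP => t; rewrite !inE => /(subsetP (Tstate_sub h i)); rewrite inE.
exact: leq_trans (card_preimage_inl _) (Tstate_card h i).
Qed.

Definition next_potential h := r * \sum_(x in selM h) potential (rcons h x).

Lemma next_potential_ge h :
  potential h + r * gain k f ord selY h (selM h) <= next_potential h.
Proof.
have step x : potential h + \sum_(i < m) nabla (ext (f i)) k x (Ts h i) <=
              potential (rcons h x).
  by rewrite /potential -big_split; apply: ler_sum => i _; case: (Tstate_step h x i).
apply: le_trans (ler_wpM2l invn_ge0 (ler_sum _ (fun x _ => step x))).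
rewrite big_split sumr_const card_selM /= mulrDr -(mulr_natr (potential h)).
by rewrite mulrCA (mulVn l_gt0) ?mulr1.
Qed.

(* [selM h] beats any [l]-set containing (the copy of) [O], and [sum_nabla_ge]
   bounds the gain of such a set agent by agent. *)
Lemma gain_ge h (O : {set T}) (Os : 'I_m -> {set T}) : (#|O| <= l)%N ->
  (forall i, Os i \subset O /\ (#|Os i| <= k)%N) ->
  \sum_(i < m) (ext (f i) (Ts h i :|: inl @: Os i) - 2 * ext (f i) (Ts h i))
    <= gain k f ord selY h (selM h).
Proof.
move=> cO HOs; have card_inl := card_imset _ (@inl_inj T 'I_l).
have [O2 [sO2 _ cO2]] : exists O2 : {set TP},
    [/\ inl @: O \subset O2, O2 \subset setT & #|O2| = l].
  apply: subset_card_between (subsetT _) _.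
  by rewrite card_inl cO cardsT card_sum card_ord leq_addl.
apply: le_trans (proj2 (vM h) O2 cO2); rewrite /gain exchange_big /=.
apply: ler_sum => i _; have [Oi ci] := HOs i.
apply: le_trans (@sum_nabla_ge _ _ _ _ k (Ts h i) (inl @: Os i)
  (submodular_ext (f_submod i)) (fun=> f_ge0 i _) _) _.
  by rewrite card_inl.
apply: ler_sum_subset (nabla_ge0 _ _ ^~ _); exact: subset_trans (imsetS _ Oi) sO2.
Qed.

Let q_ge0 : 0 <= q. Proof. by rewrite subr_ge0 invf_le1 ?ler1n ?ltr0n. Qed.
Let q_le1 : q <= 1. Proof. by rewrite lerBlDr lerDl invn_ge0. Qed.

Lemma Ex_setU_ge t i (B : {set TP}) :
  q ^+ t * ext (f i) B <= Ex t (fun h => ext (f i) (Ts h i :|: B)) [::].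
Proof.
have Ex_ge0 (phi : seq TP -> R) : (forall h, 0 <= phi h) -> 0 <= Ex t phi [::].
  by move=> phi0; rewrite -(Ex_const card_selM l_gt0 t 0 [::]) Ex_le.
have mem_le u : Ex t (fun h => (u \in Ts h i)%:R) [::] <= 1 - q ^+ t.
  have := Ex_mem_le R card_selM l_gt0 t u [::]; rewrite in_nil subr0 mulr1.
  apply: le_trans; apply: Ex_le => h.
  have [/(subsetP (Tstate_sub h i))|_] := boolP (u \in Ts h i); last by rewrite ler0n.
  by rewrite inE => ->.
have := @submod_sampling R TP (seq TP) (fun phi => Ex t phi [::])
  (fun phi psi => Ex_le selM t [::]) (fun phi psi => Ex_add selM t phi psi [::])
  (fun c phi => Ex_scale selM t c phi [::]) (fun c => Ex_const card_selM l_gt0 t c [::])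
  _ (submodular_setUr B (submodular_ext (f_submod i))) (fun A => f_ge0 i _)
  setT (fun h => Ts h i) (1 - q ^+ t) 0 (fun h => subsetT _).
rewrite set0U mul0r addr0 subKr; apply=> [u _|]; last by rewrite subr_ge0 exprn_ile1.
by rewrite mem_le andbT Ex_ge0 // => h; rewrite ler0n.
Qed.

Definition Epot t := Ex t potential [::].

Lemma Epot_le_S t : Epot t <= Epot t.+1.
Proof.
rewrite /Epot ExSr; apply: Ex_le => h; apply: le_trans (next_potential_ge h).
rewrite lerDl mulr_ge0 ?invn_ge0 // !sumr_ge0 // => x _; rewrite sumr_ge0 // => i _.
exact: nabla_ge0.
Qed.

(* Average [next_potential_ge] and [gain_ge] over the history; [Ex_setU_ge]
   then bounds the expected value of f_i(T_i u O_i). *)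
Lemma Epot_S_ge t (O : {set T}) (Os : 'I_m -> {set T}) : (#|O| <= l)%N ->
  (forall i, Os i \subset O /\ (#|Os i| <= k)%N) ->
  (1 - 2 * r) * Epot t + r * (q ^+ t * \sum_(i < m) f i (Os i)) <= Epot t.+1.
Proof.
move=> cO HOs; pose Psi h := \sum_(i < m) ext (f i) (Ts h i :|: inl @: Os i).
have pointwise h : (1 - 2 * r) * potential h + r * Psi h <= next_potential h.
  apply: le_trans (next_potential_ge h).
  have := ler_wpM2l (invn_ge0 (n := l)) (gain_ge h cO HOs).
  by rewrite sumrB -mulr_sumr /Psi -/(potential h); lra.
have -> : Epot t.+1 = Ex t next_potential [::] by rewrite /Epot ExSr.
apply: le_trans (Ex_le selM t [::] pointwise); rewrite Ex_add !Ex_scale.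
rewrite lerD2l ler_wpM2l ?invn_ge0 // /Psi Ex_sum mulr_sumr ler_sum // => i _.
by rewrite -(ext_imset_inl l (f i)) Ex_setU_ge.
Qed.

Definition lower_coef t : R := t%:R * r / 2 * q ^+ t.-1.

Lemma lower_coef_S t : (t < l)%N ->
  lower_coef t.+1 <= (1 - 2 * r) * lower_coef t + r * q ^+ t.
Proof.
rewrite /lower_coef; case: t => [|s] sl /=.
  rewrite expr0 !mulr1 !mul0r mulr0 add0r mul1r.
  by have := invn_ge0 (R := R) (n := l); lra.
have Q0 : 0 <= q ^+ s by rewrite exprn_ge0.
set Q := q ^+ s; rewrite exprS -/Q.
have -> : (s.+2%:R : R) = s%:R + 2 by rewrite -addn2 natrD.
have -> : (s.+1%:R : R) = s%:R + 1 by rewrite -addn1 natrD.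
have rs : r * (s%:R + 2) <= 1.
  rewrite -[leRHS](mulVn l_gt0) ler_wpM2l ?invn_ge0 //.
  by rewrite -[2]/(2%:R) -natrD ler_nat addn2.
have : 0 <= r * Q * (1 - r * (s%:R + 2)) / 2.
  by rewrite divr_ge0 ?mulr_ge0 ?invn_ge0 ?subr_ge0.
have -> : r * Q * (1 - r * (s%:R + 2)) / 2 = (1 - 2 * r) * ((s%:R + 1) * r / 2 * Q) +
   r * ((1 - r) * Q) - (s%:R + 2) * r / 2 * ((1 - r) * Q).
  by field; rewrite pnatr_eq0 -lt0n.
lra.
Qed.

Lemma Epot_ge (O : {set T}) (Os : 'I_m -> {set T}) : (#|O| <= l)%N ->
  (forall i, Os i \subset O /\ (#|Os i| <= k)%N) ->
  forall t, (t <= l)%N -> lower_coef t * \sum_(i < m) f i (Os i) <= Epot t.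
Proof.
move=> cO HOs; set F := \sum_(i < m) _.
have F0 : 0 <= F by rewrite sumr_ge0 // => i _; apply: f_ge0.
elim=> [|t IH] tl; first by rewrite /lower_coef !mul0r sumr_ge0 // => i _; apply: f_ge0.
have IH' := IH (ltnW tl); have mono := Epot_le_S t.
have rec := Epot_S_ge t cO HOs; rewrite -/F in rec.
have [l_le1|l_gt1] := leqP l 1.
  have l1 : l = 1%N by apply/eqP; rewrite eqn_leq l_le1.
  have t0 : t = 0%N by move: tl; rewrite l1 ltnS leqn0 => /eqP.
  have r1 : r = 1 by rewrite l1 invr1.
  move: mono rec IH'; rewrite /lower_coef t0 r1 /= !expr0 !mul1r !mulr1 !mul0r -/F; lra.
have c0 : 0 <= 1 - 2 * r.
  suff : r <= 2^-1 by lra.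
  by rewrite lef_pV2 ?posrE ?ltr0n ?ler_nat // ltnW.
move: (lower_coef t) (lower_coef t.+1) IH' (lower_coef_S tl) => c c' IH' step.
have := ler_wpM2l c0 IH'; have := ler_wpM2r F0 step; rewrite mulrDl -!mulrA; lra.
Qed.

Lemma Eval_ge (O : {set T}) : (#|O| <= l)%N ->
  (2 * expR 1)^-1 * Fobj k f O <= Eval k f selM l [::].
Proof.
move=> cO.
pose Os i := [arg max_(A > set0 | (A \subset O) && (#|A| <= k)%N) f i A]%O.
have Os_ok i : Os i \subset O /\ (#|Os i| <= k)%N.
  by rewrite /Os; case: arg_maxP => [|A /andP[]//]; rewrite sub0set cards0.
have FO : Fobj k f O = \sum_(i < m) f i (Os i).
  apply: eq_bigr => i _; apply: bigmax_eq_arg; first by rewrite sub0set cards0.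
  by move=> A _; apply: f_ge0.
rewrite Eval_Ex; apply: le_trans (Ex_le selM l [::] potential_le_Fobj).
apply: le_trans (Epot_ge cO Os_ok (leqnn l)); rewrite -FO.
have -> : lower_coef l = 2^-1 * q ^+ l.-1.
  by rewrite /lower_coef [_%:R * _]mulrC (mulVn l_gt0) mul1r.
apply: ler_wpM2r; first by rewrite sumr_ge0 // => i _; apply: bigmax_ge_id.
by rewrite invfM ler_pM2l ?invr_gt0 ?ltr0n // -{1}(prednK l_gt0) inv_expR1_le.
Qed.

End SamplingGreedyAnalysis.

Theorem mainTheorem4 (R : realType) (T : finType) (m k l : nat)
  (f : 'I_m -> {set T} -> R)
  (ord : seq (Tp T l))
  (selM : seq (Tp T l) -> {set Tp T l})
  (selY : seq (Tp T l) -> 'I_m -> Tp T l) :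
  (1 <= k)%N -> (1 <= l)%N ->
  (forall i, submodular (f i)) -> (forall i, nonneg_fun (f i)) ->
  uniq ord -> (forall x, x \in ord) ->
  valid_selM k f ord selM selY -> valid_selY k f ord selY ->
  (forall h, size h = l -> reachable selM h -> (#|outset h| <= l)%N) /\
  (forall O : {set T}, (#|O| <= l)%N ->
     (forall S' : {set T}, (#|S'| <= l)%N -> Fobj k f S' <= Fobj k f O) ->
     (2 * expR 1)^-1 * Fobj k f O <= Eval k f selM l [::]).
Proof.
(* The bound holds for every [O] with [#|O| <= l], optimal or not. *)
move=> _ l_gt0 f_submod f_ge0 _ _ vM vY; split.
  by move=> h hl _; rewrite -[leqRHS]hl card_outset.
by move=> O cO _; apply: Eval_ge.
Qed.
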